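(* Let $\mathcal{G}^0=(\mathcal V,\mathcal E^0)$ be a graph on $\mathcal V=\{1,\dots,N\}$ (not necessarily undirected) and let the packet-loss processes $\{\theta^{ij}_k\}$, $e^{ij}\in\mathcal E^0$, satisfy Assumption A. Then for every $k\ge 0$, $$\mathbb E\big[L_{\sigma_{k+1}}^\top L_{\sigma_{k+1}}\,\big|\,\sigma_k\big]=\mathbb E\big[L_{\sigma_{k+1}}\,\big|\,\sigma_k\big]^\top\,\mathbb E\big[L_{\sigma_{k+1}}\,\big|\,\sigma_k\big]+\mathcal V_k(\mathcal G)+\mathcal V_k(\mathcal G^\top),$$ where conditional expectations of random matrices are taken entrywise and $\mathcal V_k(\mathcal G),\mathcal V_k(\mathcal G^\top)$ are the conditional variance matrices defined in the context.
   Context: Graphs: $\mathcal G=(\mathcal V,\mathcal E)$ with $\mathcal V=\{1,\dots,N\}$, $\mathcal E\subseteq\mathcal V\times\mathcal V$, no self-loops; $e^{ij}:=(i,j)$ is read as an edge pointing from $j$ to $i$. In-neighbourhood $\mathcal N_i^-=\{j:e^{ij}\in\mathcal E\}$, out-neighbourhood $\mathcal N_i^+=\{j:e^{ji}\in\mathcal E\}$. The transposed graph $\mathcal G^\top$ has edge set $\{e^{ij}:e^{ji}\in\mathcal E\}$. The Laplacian $L(\mathcal G)=[l_{ij}]\in\mathbb Z^{N\times N}$ has $l_{ij}=-1$ if $i\neq j$ and $e^{ij}\in\mathcal E$, $l_{ij}=0$ if $i\ne j$ and $e^{ij}\notin\mathcal E$, and $l_{ii}=-\sum_{l\neq i}l_{il}$.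 Packet loss: for each $e^{ij}\in\mathcal E^0$ there is a $\{0,1\}$-valued process $\{\theta^{ij}_k\}_{k\ge0}$ ($1$ = successful transmission on $e^{ij}$ at time $k$). Let $\sigma_k:=(\theta^{ij}_k)_{e^{ij}\in\mathcal E^0}$ denote the joint state, $\mathcal G_{\sigma_k}:=(\mathcal V,\{e^{ij}\in\mathcal E^0:\theta^{ij}_k=1\})$, $L_{\sigma_k}:=L(\mathcal G_{\sigma_k})$, $L^0:=L(\mathcal G^0)$. Assumption A: there are numbers $p^{ij},q^{ij},\eta^{ij}\in[0,1]$ such that $\mathbb P(\theta^{ij}_0=1)=\eta^{ij}$; $\{\sigma_k\}$ is a Markov chain and, conditionally on $\sigma_k$, $\theta^{ij}_{k+1}=1$ with probability $p^{ij}$ if $\theta^{ij}_k=1$ and with probability $q^{ij}$ if $\theta^{ij}_k=0$; and the processes associated with distinct unordered pairs of vertices (i.e. $\theta^{ij}$ and $\theta^{rs}$ whenever $e^{rs}\notin\{e^{ij},e^{ji}\}$) are mutually independent. Conditional variance matrices: set $v^{ij}_k:=\operatorname{Var}[\theta^{ij}_{k+1}\mid\sigma_k]$ for $e^{ij}\in\mathcal E^0$ ($=\alpha(1-\alpha)$ with $\alpha=\mathbb E[\theta^{ij}_{k+1}\mid\sigma_k]$). $\mathcal V_k(\mathcal G)$ is the $N\times N$ matrix with off-diagonal entries $-v^{ij}_k$ if $e^{ij}\in\mathcal E^0$ and $0$ otherwise, and diagonal entries $\sum_{r\in\mathcal N_i^-}v^{ir}_k$ (the conditional variance of the $i$-th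 diagonal entry of $L(\mathcal G_{\sigma_{k+1}})$); $\mathcal V_k(\mathcal G^\top)$ is the analogous matrix for the transposed graph, i.e. off-diagonal $(i,j)$ entry $-v^{ji}_k$ if $e^{ji}\in\mathcal E^0$, else $0$, and diagonal entries $\sum_{s\in\mathcal N_i^+}v^{si}_k$ (neighbourhoods w.r.t. $\mathcal G^0$). (These are the weighted Laplacians of $\mathcal G^0$ and $(\mathcal G^0)^\top$ with edge weights $v^{ij}_k$.) *)

From HB Require Import structures.
From mathcomp Require Import all_boot all_order all_algebra.
From mathcomp Require Import all_classical all_reals all_analysis.
Set Implicit Arguments. Unset Strict Implicit. Unset Printing Implicit Defensive.
Import Order.TTheory GRing.Theory Num.Theory.
Local Open Scope classical_set_scope.
Local Open Scope ring_scope.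

Section Defs.
Context {R : realType} {d : measure_display} {Omega : measurableType d}.
Context (P : probability Omega R).

(* Laplacian L(G) of a graph on 'I_N given by its edge relation E:
   E i j  <->  e^{ij} = (i,j) in the edge set (edge pointing from j to i). *)
Definition laplacian (N : nat) (E : rel 'I_N) : 'M[R]_N :=
  \matrix_(i, j) if i == j then - \sum_(l < N | l != i) (- ((E i l)%:R : R))
                 else - ((E i j)%:R : R).

(* Event {sigma_k = s}: the joint state of the edge processes on E0 at time k
   equals s (only the entries on edges of E0 are relevant). *)
Definition state_ev (N : nat) (E0 : rel 'I_N)
  (theta : 'I_N -> 'I_N -> nat -> Omega -> bool) (k : nat)
  (s : 'I_N -> 'I_N -> bool) : set Omega :=
  [set w | forall i j, E0 i j -> theta i j k w = s i j].

(* Event that the processes attached to the unordered pair {i,j}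
   (theta^{ij} if e^{ij} in E0, theta^{ji} if e^{ji} in E0) follow the
   pattern f on the times 0..n. *)
Definition pair_ev (N : nat) (E0 : rel 'I_N)
  (theta : 'I_N -> 'I_N -> nat -> Omega -> bool) (n : nat) (i j : 'I_N)
  (f : 'I_n.+1 -> bool * bool) : set Omega :=
  [set w | forall t : 'I_n.+1,
     (E0 i j -> theta i j t w = (f t).1) /\ (E0 j i -> theta j i t w = (f t).2)].

(* Conditional expectation of a real random variable X given an atom A of a
   discrete random variable (used with A = {sigma_k = s}, P A > 0). *)
Definition cexp (A : set Omega) (X : Omega -> R) : R :=
  fine (\int[P]_(w in A) (X w)%:E) / fine (P A).

Definition cvar (A : set Omega) (X : Omega -> R) : R :=
  cexp A (fun w => (X w - cexp A X) ^+ 2).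

End Defs.

From HB Require Import structures.
From mathcomp Require Import all_boot all_order all_algebra.
From mathcomp Require Import all_classical all_reals all_analysis.
From mathcomp Require Import ring.
Set Implicit Arguments. Unset Strict Implicit. Unset Printing Implicit Defensive.
Import Order.TTheory GRing.Theory Num.Theory.
Local Open Scope classical_set_scope.
Local Open Scope ring_scope.

(* Row c of the Laplacian is linear in the link indicators x_cq = [theta^{cq}_{k+1}]
   of the edges out of c: l_cb = sum_q ((c == b) - (q == b)) x_cq.  Hence
   (L^T L)_ab = sum_c sum_{q,r} coefficients * x_cq x_cr, and everything reduces to
   the conditional second moments of the links out of a common node c.  For q <> r
   the links cq and cr belong to different unordered pairs of vertices; the product
   rule for the pair processes over the times 0..k+1 makes them independent given
   sigma_k, so E[x_cq x_cr | sigma_k] = E[x_cq | sigma_k] E[x_cr | sigma_k] +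
   [q = r] Var[x_cq | sigma_k].  The means assemble into E[L]^T E[L], the variances
   into V_k(G) + V_k(G^T).  Conditional expectations on the atom {sigma_k = s} are
   finite sums over the values of the joint link state at time k+1, so linearity is
   immediate. *)

Section FiniteValuedVariables.
Context {R : realType} {d : measure_display} {Omega : measurableType d}.
Variable P : probability Omega R.

Definition Pr (S : set Omega) : R := fine (P S).

Lemma PrE S : measurable S -> P S = (Pr S)%:E.
Proof. by move=> mS; rewrite /Pr fineK //; exact: fin_num_measure. Qed.

Lemma Pr0 : Pr set0 = 0.
Proof. by rewrite /Pr measure0. Qed.

Lemma Pr_bigsetU (I : eqType) (s : seq I) (F : I -> set Omega) :
  uniq s -> (forall i, measurable (F i)) ->
  (forall i j, i != j -> F i `&` F j = set0) ->
  Pr (\big[setU/set0]_(i <- s) F i) = \sum_(i <- s) Pr (F i).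
Proof.
elim: s => [|h t IHs] /=; first by rewrite !big_nil Pr0.
move=> /andP[ht ut] mF dF.
have mU : measurable (\big[setU/set0]_(i <- t) F i) by exact: bigsetU_measurable.
rewrite !big_cons -IHs //; apply/EFin_inj.
rewrite EFinD -!PrE //; last exact: measurableU.
rewrite measureU // big_distrr /= big_seq big1 // => i it.
by apply: dF; apply: contraNneq ht => ->.
Qed.

Lemma measurable_forall (I : finType) (S : I -> set Omega) :
  (forall u, measurable (S u)) -> measurable [set w | forall u, S u w].
Proof.
move=> mS.
suff -> : [set w | forall u, S u w] = \big[setI/setT]_(u <- index_enum I) S u.
  exact: bigsetI_measurable.
rewrite -bigcap_seq; apply/seteqP; split => [w /= Sw u _ | w /= Sw u] //.
by apply: Sw; rewrite /= mem_index_enum.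
Qed.

Section Fibres.
Variables (T : finType) (X : Omega -> T).
Hypothesis mX : forall t, measurable (X @^-1` [set t]).

Lemma measurable_fibres_pred (Q : pred T) : measurable [set w | Q (X w)].
Proof.
suff -> : [set w | Q (X w)] = \bigcup_(t in [set t | Q t]) X @^-1` [set t].
  by apply: fin_bigcup_measurable => //; exact: finite_finset.
by apply/seteqP; split => [w /= Qw | w [t /= Qt e]] //=; [exists (X w) | rewrite e].
Qed.

Lemma bigsetU_fibres (S : set Omega) :
  S = \big[setU/set0]_(t <- index_enum T) (S `&` X @^-1` [set t]).
Proof.
rewrite -bigcup_seq; apply/seteqP; split => [w Sw | w [t _ []] //].
by exists (X w) => //=; rewrite mem_index_enum.
Qed.

Lemma Pr_partition S : measurable S -> Pr S = \sum_t Pr (S `&` X @^-1` [set t]).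
Proof.
move=> mS; rewrite {1}(bigsetU_fibres S) Pr_bigsetU ?index_enum_uniq //.
  by move=> t; exact: measurableI.
move=> t t' tt'; apply/seteqP; split => // w [[_ /= ->] [_ /= e]].
by rewrite e eqxx in tt'.
Qed.

End Fibres.
End FiniteValuedVariables.

Section ConditionalMean.
Context {R : realType} {d : measure_display} {Omega : measurableType d}.
Variable P : probability Omega R.
Variables (T : finType) (X : Omega -> T).
Hypothesis mX : forall t, measurable (X @^-1` [set t]).
Variable A : set Omega.
Hypotheses (mA : measurable A) (PrA_neq0 : Pr P A != 0).

Definition cmean (g : T -> R) : R :=
  (\sum_t g t * Pr P (A `&` X @^-1` [set t])) / Pr P A.

Lemma cexp_cmean g : cexp P A (fun w => g (X w)) = cmean g.
Proof.
rewrite /cexp /cmean -/(Pr P A); congr (_ / _).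
have mAX t : measurable (A `&` X @^-1` [set t]) by exact: measurableI.
rewrite {1}(bigsetU_fibres X A) integral_bigsetU_EFin ?index_enum_uniq //.
- rewrite (eq_bigr (fun t => (g t * Pr P (A `&` X @^-1` [set t]))%:E)) ?sumEFin //.
  move=> t _; rewrite (@eq_integral _ _ _ _ _ (fun _ => (g t)%:E)); last first.
    by move=> w /[!inE] -[_ /= ->].
  by rewrite integral_cst // /Pr EFinM fineK //; exact: fin_num_measure.
- by move=> t t' _ _ [w [[_ /= <-] [_ /= <-]]].
- move=> _ B mB; apply: measurableI; first by rewrite -bigsetU_fibres.
  have -> : (EFin \o fun w => g (X w)) @^-1` B = [set w | `[< B (g (X w))%:E >]].
    by apply/seteqP; split => w /= /asboolP.
  exact: (measurable_fibres_pred mX (fun t => `[< B (g t)%:E >])).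
Qed.

Lemma eq_cmean g h : g =1 h -> cmean g = cmean h.
Proof. by move=> gh; rewrite /cmean; under eq_bigr do rewrite gh. Qed.

Lemma cmean0 : cmean (fun=> 0) = 0.
Proof. by rewrite /cmean big1 ?mul0r // => t _; rewrite mul0r. Qed.

Lemma cmeanD g h : cmean (fun t => g t + h t) = cmean g + cmean h.
Proof.
rewrite /cmean -mulrDl -big_split; congr (_ / _).
by apply: eq_bigr => t _; rewrite mulrDl.
Qed.

Lemma cmeanZ a g : cmean (fun t => a * g t) = a * cmean g.
Proof.
rewrite /cmean mulrA mulr_sumr; congr (_ / _).
by apply: eq_bigr => t _; rewrite mulrA.
Qed.

Lemma cmean_sum (I : finType) (F : I -> T -> R) :
  cmean (fun t => \sum_i F i t) = \sum_i cmean (F i).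
Proof.
rewrite /cmean -mulr_suml exchange_big /=; congr (_ / _).
by apply: eq_bigr => t _; rewrite mulr_suml.
Qed.

Lemma cmean_pred (Q : pred T) :
  cmean (fun t => (Q t)%:R) = Pr P (A `&` [set w | Q (X w)]) / Pr P A.
Proof.
have mAQ : measurable (A `&` [set w | Q (X w)]).
  by apply: measurableI => //; exact: measurable_fibres_pred.
rewrite /cmean (Pr_partition P mX mAQ); congr (_ / _).
apply: eq_bigr => t _; case: (boolP (Q t)) => Qt.
  rewrite mul1r; congr (Pr P _); apply/seteqP.
  by split=> w /= [Aw Xw]; [split=> //; rewrite Xw | case: Aw].
rewrite mul0r (_ : _ `&` _ = set0) ?Pr0 //; apply/seteqP; split=> w // [[_ /=]].
by move=> + Xw; rewrite Xw (negbTE Qt).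
Qed.

Lemma cmean1 : cmean (fun=> 1) = 1.
Proof.
rewrite (eq_cmean (h := fun t => (predT t)%:R)) // cmean_pred.
by rewrite (_ : _ `&` _ = A) ?divff //; apply/seteqP; split=> [w []|w].
Qed.

Lemma cvar_indicator (b : pred T) (m := cmean (fun t => (b t)%:R)) :
  cvar P A (fun w => (b (X w))%:R) = m - m ^+ 2.
Proof.
rewrite /cvar (cexp_cmean (fun t => (b t)%:R)) -/m.
have bsq t : ((b t)%:R - m) ^+ 2 = (1 - 2 * m) * (b t)%:R + m ^+ 2 * 1.
  by case: (b t); rewrite /=; ring.
rewrite (cexp_cmean (fun t => ((b t)%:R - m) ^+ 2)) (eq_cmean bsq).
by rewrite cmeanD !cmeanZ cmean1 -/m; ring.
Qed.

End ConditionalMean.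

Arguments eq_cmean {R d Omega P T X A g h}.
Arguments cmean0 {R d Omega P T X A}.

Section ProductRule.
Context {R : realType} {d : measure_display} {Omega : measurableType d}.
Variable P : probability Omega R.

Lemma mutual_indep_from_atoms (I T : finType) (X : I -> Omega -> T) :
  (forall u t, measurable (X u @^-1` [set t])) ->
  (forall F : {ffun I -> T}, Pr P [set w | forall u, X u w = F u]
       = \prod_u Pr P (X u @^-1` [set F u])) ->
  forall Q : I -> pred T,
  Pr P [set w | forall u, Q u (X u w)] = \prod_u Pr P [set w | Q u (X u w)].
Proof.
move=> mX hF Q; pose XI w := [ffun u => X u w].
have XIE F : XI @^-1` [set F] = [set w | forall u, X u w = F u].
  apply/seteqP; split=> w /=; first by move=> <- u; rewrite ffunE.
  by move=> XF; apply/ffunP => u; rewrite ffunE XF.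
have mXI F : measurable (XI @^-1` [set F]).
  by rewrite XIE; apply: measurable_forall => u; exact: mX.
have mQ u : measurable [set w | Q u (X u w)] by exact: measurable_fibres_pred.
rewrite (Pr_partition P mXI); last exact: measurable_forall.
under eq_bigr => u _ do rewrite (Pr_partition P (mX u)) //.
rewrite bigA_distr_bigA; apply: eq_bigr => F _.
have QXE u t : [set w | Q u (X u w)] `&` X u @^-1` [set t]
    = if Q u t then X u @^-1` [set t] else set0.
  case: ifPn => Qt; apply/seteqP; split=> w //=; first by case.
    by move=> Xt; split=> //; rewrite Xt.
  by case=> + Xt; rewrite Xt (negbTE Qt).
under eq_bigr => u _ do rewrite QXE (fun_if (Pr P)) Pr0.
have [QF | /forallPn[u nQ]] := boolP [forall u, Q u (F u)].
  have -> : [set w | forall u, Q u (X u w)] `&` XI @^-1` [set F] = XI @^-1` [set F].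
    apply/setIidr; rewrite XIE => w XF u.
    by rewrite XF (forallP QF).
  by rewrite XIE hF; apply: eq_bigr => u _; rewrite (forallP QF u).
rewrite (bigD1 u) //= (negbTE nQ) mul0r (_ : _ `&` _ = set0) ?Pr0 //.
apply/seteqP; split=> w //= [Qw XF]; have := Qw u.
by rewrite (_ : X u w = F u) ?(negbTE nQ) // -XF ffunE.
Qed.

End ProductRule.

Lemma measurable_andb_eq {d : measure_display} {Omega : measurableType d}
    (b c : bool) (th : Omega -> bool) :
  measurable [set w | th w] -> measurable [set w | (b && th w) = c].
Proof.
move=> mth; case: b c => [] [] //=.
- rewrite (_ : [set w | th w = false] = ~` [set w | th w]); first exact: measurableC.
  by apply/seteqP; split=> w /=; [move=> -> | move/negP/negbTE].
- by rewrite (_ : [set w | false = true] = set0) //; apply/seteqP; split.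
- by rewrite (_ : [set w | false = false] = setT) //; apply/seteqP; split.
Qed.

Section PairPatterns.
Context {R : realType} {d : measure_display} {Omega : measurableType d}.
Variable P : probability Omega R.
Variables (N : nat) (E0 : rel 'I_N) (theta : 'I_N -> 'I_N -> nat -> Omega -> bool).
Hypothesis mtheta : forall i j k, measurable [set w | theta i j k w].
Variable n : nat.
Hypothesis pair_indep : forall F : 'I_N -> 'I_N -> 'I_n.+1 -> bool * bool,
  P [set w | forall i j : 'I_N, (i < j)%N -> pair_ev E0 theta i j (F i j) w]
  = (\prod_(ij : 'I_N * 'I_N | (ij.1 < ij.2)%N)
       P (pair_ev E0 theta ij.1 ij.2 (F ij.1 ij.2)))%E.

Definition pair_edge (u : 'I_N * 'I_N) := [rel i j | (u.1 < u.2)%N && E0 i j].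

(* The trajectory on times 0..n of the processes of the unordered pair u,
   recorded only at the ordered representative u.1 < u.2 and with every
   non-edge read as [false], so that it ranges over a finite type. *)
Definition pair_pattern (u : 'I_N * 'I_N) (w : Omega) :
    {ffun 'I_n.+1 -> bool * bool} :=
  [ffun t : 'I_n.+1 => (pair_edge u u.1 u.2 && theta u.1 u.2 t w,
                       pair_edge u u.2 u.1 && theta u.2 u.1 t w)].

Definition admissible_pattern u (f : {ffun 'I_n.+1 -> bool * bool}) :=
  [forall t, ((f t).1 ==> pair_edge u u.1 u.2) && ((f t).2 ==> pair_edge u u.2 u.1)].

Lemma measurable_pair_pattern u f : measurable (pair_pattern u @^-1` [set f]).
Proof.
have -> : pair_pattern u @^-1` [set f] = [set w | forall t : 'I_n.+1,
    ([set w | (pair_edge u u.1 u.2 && theta u.1 u.2 t w) = (f t).1] `&`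
     [set w | (pair_edge u u.2 u.1 && theta u.2 u.1 t w) = (f t).2]) w].
  apply/seteqP; split=> w /=; first by move=> <- t; rewrite ffunE.
  move=> Pf; apply/ffunP => t; rewrite ffunE; case: (Pf t).
  by case: (f t) => ? ? /= -> ->.
by apply: measurable_forall => t; apply: measurableI; exact: measurable_andb_eq.
Qed.

Lemma pair_pattern_admissible u w : admissible_pattern u (pair_pattern u w).
Proof.
by apply/forallP => t; rewrite ffunE; apply/andP; split; apply/implyP => /andP[].
Qed.

Lemma pair_patternE (i j : 'I_N) f w : (i < j)%N -> admissible_pattern (i, j) f ->
  pair_pattern (i, j) w = f <-> pair_ev E0 theta i j f w.
Proof.
move=> ij /forallP adm; split.
  by move=> <- t; rewrite ffunE /pair_edge /= ij; split=> ->.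
move=> Pf; apply/ffunP => t; rewrite ffunE /pair_edge /= ij /=.
have := adm t; rewrite /pair_edge /= ij /=.
case: (Pf t); case: (f t) => a b /= h1 h2 /andP[a1 b2]; congr (_, _).
  by case: (E0 i j) h1 a1 => [-> // | _]; rewrite implybF => /negbTE.
by case: (E0 j i) h2 b2 => [-> // | _]; rewrite implybF => /negbTE.
Qed.

Lemma admissible_pattern_lower (u : 'I_N * 'I_N) f :
  ~~ (u.1 < u.2)%N -> admissible_pattern u f -> pair_pattern u @^-1` [set f] = setT.
Proof.
move=> /negbTE nu /forallP adm; apply/seteqP; split=> // w _ /=.
apply/ffunP => t; rewrite ffunE /pair_edge /= nu /=.
case: (f t) (adm t) => a b; rewrite /pair_edge nu /= !implybF.
by case/andP=> /negbTE-> /negbTE->.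
Qed.

Lemma pair_pattern_atoms_indep
    (F : {ffun 'I_N * 'I_N -> {ffun 'I_n.+1 -> bool * bool}}) :
  Pr P [set w | forall u, pair_pattern u w = F u]
  = \prod_u Pr P (pair_pattern u @^-1` [set F u]).
Proof.
have [/forallP adm | /forallPn[u nadm]] :=
  boolP [forall u, admissible_pattern u (F u)]; last first.
  have empty : pair_pattern u @^-1` [set F u] = set0.
    apply/seteqP; split=> w //= Fw.
    by move: (pair_pattern_admissible u w); rewrite Fw (negbTE nadm).
  rewrite (bigD1 u) //= empty Pr0 mul0r (_ : [set w | _] = set0) ?Pr0 //.
  by apply/seteqP; split=> w // Fw; rewrite -empty /=; exact: Fw.
rewrite (bigID (fun u : 'I_N * 'I_N => (u.1 < u.2)%N)) /=.
rewrite [X in _ * X]big1 ?mulr1; last first.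
  by move=> u nu; rewrite admissible_pattern_lower // /Pr probability_setT.
have mF : measurable [set w | forall u, pair_pattern u w = F u].
  by apply: measurable_forall => u; exact: measurable_pair_pattern.
apply: EFin_inj; rewrite -prodEFin -PrE //.
have -> : [set w | forall u, pair_pattern u w = F u] = [set w | forall i j : 'I_N,
    (i < j)%N -> pair_ev E0 theta i j (F (i, j)) w].
  apply/seteqP; split=> w /= Fw.
    by move=> i j ij; apply/pair_patternE => //; exact: adm.
  move=> [i j]; case: (ltnP i j) => ij; first by apply/pair_patternE => //; exact: Fw.
  have := admissible_pattern_lower (u := (i, j)) (negbT (leq_gtF ij)) (adm _).
  by case/seteqP=> _ /(_ w I).
rewrite (pair_indep (fun i j => F (i, j))); apply: eq_bigr => -[i j] /= ij.
rewrite -PrE; last exact: measurable_pair_pattern.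
by congr (P _); apply/seteqP; split=> w /= /pair_patternE; apply=> //; exact: adm.
Qed.

Lemma pair_patterns_indep (Q : 'I_N * 'I_N -> pred {ffun 'I_n.+1 -> bool * bool}) :
  Pr P [set w | forall u, Q u (pair_pattern u w)]
  = \prod_u Pr P [set w | Q u (pair_pattern u w)].
Proof.
apply: mutual_indep_from_atoms; last exact: pair_pattern_atoms_indep.
by move=> u t; exact: measurable_pair_pattern.
Qed.

End PairPatterns.

Lemma prod_cross_two {R : comPzRingType} (I : finType) (u1 u2 : I)
    (h : bool -> bool -> I -> R) :
  u1 != u2 ->
  (forall b1 b2 u, u != u1 -> u != u2 -> h b1 b2 u = h false false u) ->
  (forall b1 b2, h b1 b2 u1 = h b1 false u1) ->
  (forall b1 b2, h b1 b2 u2 = h false b2 u2) ->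
  (\prod_u h true true u) * (\prod_u h false false u)
  = (\prod_u h true false u) * (\prod_u h false true u).
Proof.
move=> u12 hu h1 h2.
have split b1 b2 : \prod_u h b1 b2 u = h b1 false u1 * h false b2 u2 *
    \prod_(u | (u != u1) && (u != u2)) h false false u.
  rewrite (bigD1 u1) //= (bigD1 u2) /= 1?eq_sym // h1 h2 mulrA.
  by congr (_ * _); apply: eq_bigr => u /andP[]; exact: hu.
by rewrite !split; ring.
Qed.

Section StateConditioning.
Context {R : realType} {d : measure_display} {Omega : measurableType d}.
Variable P : probability Omega R.
Variables (N : nat) (E0 : rel 'I_N) (theta : 'I_N -> 'I_N -> nat -> Omega -> bool).
Hypothesis hirr : irreflexive E0.
Hypothesis mtheta : forall i j k, measurable [set w | theta i j k w].
Hypothesis pair_indep : forall (n : nat) (F : 'I_N -> 'I_N -> 'I_n.+1 -> bool * bool),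
  P [set w | forall i j : 'I_N, (i < j)%N -> pair_ev E0 theta i j (F i j) w]
  = (\prod_(ij : 'I_N * 'I_N | (ij.1 < ij.2)%N)
       P (pair_ev E0 theta ij.1 ij.2 (F ij.1 ij.2)))%E.

Definition pair_key (i j : 'I_N) := if (i < j)%N then (i, j) else (j, i).
Definition pair_sel (i j : 'I_N) (x : bool * bool) := if (i < j)%N then x.1 else x.2.

Lemma pair_sel_pattern n (i j : 'I_N) w t : E0 i j ->
  pair_sel i j (pair_pattern E0 theta n (pair_key i j) w t) = theta i j t w.
Proof.
move=> Eij; have : i != j by apply: contraTneq Eij => ->; rewrite hirr.
rewrite /pair_sel /pair_key /pair_pattern /pair_edge.
case: ltngtP => [ij|ji|/val_inj->] /=.
- by rewrite ffunE /= ij Eij.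
- by rewrite ffunE /= ji Eij.
- by rewrite eqxx.
Qed.

Lemma pair_key_out_neq (c q r : 'I_N) :
  c != q -> c != r -> q != r -> pair_key c q != pair_key c r.
Proof.
move=> cq cr qr; rewrite /pair_key; case: ifP => _; case: ifP => _.
- by rewrite xpair_eqE negb_and qr orbT.
- by rewrite xpair_eqE negb_and cr.
- by rewrite xpair_eqE negb_and eq_sym cq.
- by rewrite xpair_eqE negb_and qr.
Qed.

(* The state at time k and the two links at time k+1 are read off the
   patterns of the pairs on times 0..k+1; only the patterns of the pairs
   {c,q} and {c,r} carry the information about the links, so the product
   rule for pair patterns splits off their contributions. *)
Lemma state_out_edges_indep k s (c q r : 'I_N) : E0 c q -> E0 c r -> q != r ->
  let A := state_ev E0 theta k s in
  Pr P (A `&` [set w | theta c q k.+1 w && theta c r k.+1 w]) * Pr P A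
  = Pr P (A `&` [set w | theta c q k.+1 w])
    * Pr P (A `&` [set w | theta c r k.+1 w]).
Proof.
move=> Ecq Ecr qr A.
have cq : c != q by apply: contraTneq Ecq => ->; rewrite hirr.
have cr : c != r by apply: contraTneq Ecr => ->; rewrite hirr.
pose tk : 'I_k.+2 := inord k; pose tk1 : 'I_k.+2 := inord k.+1.
pose at_state u (f : {ffun 'I_k.+2 -> bool * bool}) :=
  [forall i, forall j,
     ((pair_key i j == u) && E0 i j) ==> (pair_sel i j (f tk) == s i j)].
pose link i j u (f : {ffun 'I_k.+2 -> bool * bool}) :=
  (u == pair_key i j) ==> pair_sel i j (f tk1).
pose Q b1 b2 u f := [&& at_state u f, b1 ==> link c q u f & b2 ==> link c r u f].
pose S b1 b2 := A `&` [set w | (b1 ==> theta c q k.+1 w) && (b2 ==> theta c r k.+1 w)].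
have patE t i j w : (t <= k.+1)%N -> E0 i j ->
    pair_sel i j (pair_pattern E0 theta k.+1 (pair_key i j) w (inord t)) = theta i j t w.
  by move=> tk2 Eij; rewrite pair_sel_pattern // inordK.
have SE b1 b2 :
    S b1 b2 = [set w | forall u, Q b1 b2 u (pair_pattern E0 theta k.+1 u w)].
  apply/seteqP; split=> w /=.
  - move=> [Aw /andP[h1 h2]] u; apply/and3P; split.
    + apply/forallP => i; apply/forallP => j; apply/implyP => /andP[/eqP <- Eij].
      by rewrite patE ?leqnSn // (Aw i j Eij).
    + by apply/implyP => b; apply/implyP => /eqP ->; rewrite patE // (implyP h1 b).
    + by apply/implyP => b; apply/implyP => /eqP ->; rewrite patE // (implyP h2 b).
  - move=> Qw; split=> [i j Eij|]; last apply/andP; last split.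
    + have /and3P[/forallP/(_ i)/forallP/(_ j) + _ _] := Qw (pair_key i j).
      by rewrite eqxx Eij patE ?leqnSn // => /eqP.
    + apply/implyP => b; have /and3P[_ /implyP/(_ b) + _] := Qw (pair_key c q).
      by rewrite /link eqxx patE.
    + apply/implyP => b; have /and3P[_ _ /implyP/(_ b)] := Qw (pair_key c r).
      by rewrite /link eqxx patE.
have cross : Pr P (S true true) * Pr P (S false false)
           = Pr P (S true false) * Pr P (S false true).
  rewrite !SE !(pair_patterns_indep mtheta (@pair_indep k.+1)).
  have kqr := pair_key_out_neq cq cr qr.
  apply: (@prod_cross_two R _ (pair_key c q) (pair_key c r)
    (fun b1 b2 u => Pr P [set w | Q b1 b2 u (pair_pattern E0 theta k.+1 u w)])) => //.
  - move=> b1 b2 u uq ur; suff -> : Q b1 b2 u = Q false false u by [].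
    by apply: funext => f; rewrite /Q /link (negbTE uq) (negbTE ur) !implybT.
  - move=> b1 b2; suff -> : Q b1 b2 (pair_key c q) = Q b1 false (pair_key c q) by [].
    by apply: funext => f; rewrite /Q /link (negbTE kqr) !implybT.
  - move=> b1 b2; suff -> : Q b1 b2 (pair_key c r) = Q false b2 (pair_key c r) by [].
    by apply: funext => f; rewrite /Q /link eq_sym (negbTE kqr) !implybT.
have S00 : S false false = A by apply/seteqP; split=> [w []|w].
have S10 : S true false = A `&` [set w | theta c q k.+1 w].
  rewrite /S; apply/seteqP; split=> w [Aw]; first by move=> /andP[].
  by move=> h; split=> //; apply/andP.
have S01 : S false true = A `&` [set w | theta c r k.+1 w] by [].
by rewrite S00 S10 S01 in cross; exact: cross.
Qed.

End StateConditioning.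

Section LaplacianCoefficients.
Variables (R : comPzRingType) (N : nat).

Lemma sum_delta (a : 'I_N) (F : 'I_N -> R) : \sum_i (i == a)%:R * F i = F a.
Proof.
rewrite (bigD1 a) //= eqxx mul1r big1 ?addr0 // => i /negbTE->.
exact: mul0r.
Qed.

Definition lap_coef (c b q : 'I_N) : R := (c == b)%:R - (q == b)%:R.

Lemma sum_lap_coef2 (V : 'I_N -> 'I_N -> R) a b :
  \sum_c \sum_q lap_coef c a q * lap_coef c b q * V c q
  = (a == b)%:R * (\sum_q V a q + \sum_c V c a) - V a b - V b a.
Proof.
have qab (q : 'I_N) : (q == a)%:R * (q == b)%:R = (a == b)%:R * (q == a)%:R :> R.
  by case: (eqVneq q a) => [->|]; rewrite ?mul0r ?mulr0 ?mul1r ?mulr1.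
have expand c q : lap_coef c a q * lap_coef c b q * V c q
    = (c == a)%:R * ((c == b)%:R * V c q) - (c == a)%:R * ((q == b)%:R * V c q)
      - (c == b)%:R * ((q == a)%:R * V c q) + (a == b)%:R * ((q == a)%:R * V c q).
  by rewrite /lap_coef [X in _ = _ + X]mulrA -qab; ring.
under eq_bigr do under eq_bigr do rewrite expand.
under eq_bigr do rewrite !big_split /= !sumrN -!mulr_sumr !sum_delta.
by rewrite !big_split /= !sumrN -mulr_sumr !sum_delta; ring.
Qed.

Lemma sum_lap_coef_moments (m V : 'I_N -> 'I_N -> R)
    (M2 : 'I_N -> 'I_N -> 'I_N -> R) a b :
  (forall c q r, M2 c q r = m c q * m c r + (q == r)%:R * V c q) ->
  \sum_c \sum_q \sum_r lap_coef c a q * lap_coef c b r * M2 c q r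
  = \sum_c (\sum_q lap_coef c a q * m c q) * (\sum_r lap_coef c b r * m c r)
    + ((a == b)%:R * (\sum_q V a q + \sum_c V c a) - V a b - V b a).
Proof.
move=> M2E; rewrite -sum_lap_coef2 -big_split /=; apply: eq_bigr => c _.
rewrite big_distrlr -big_split /=; apply: eq_bigr => q _.
under eq_bigr do rewrite M2E mulrDr.
rewrite big_split /=; congr (_ + _).
  by apply: eq_bigr => r _; rewrite mulrACA.
rewrite (bigD1 q) //= eqxx mul1r big1 ?addr0 //.
by move=> r; rewrite eq_sym => /negbTE->; rewrite mul0r mulr0.
Qed.

End LaplacianCoefficients.

Lemma laplacian_lap_coef {R : realType} (N : nat) (E : rel 'I_N) (c b : 'I_N) :
  ~~ E c c -> laplacian E c b = \sum_q lap_coef R c b q * (E c q)%:R.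
Proof.
move=> /negbTE Ecc; rewrite mxE /lap_coef; case: eqVneq => [<-|cb].
  rewrite sumrN opprK [RHS](bigD1 c) //= eqxx subrr mul0r add0r.
  by apply: eq_bigr => q /negbTE->; rewrite subr0 mul1r.
rewrite (bigD1 b) //= eqxx big1 ?addr0 ?sub0r ?mulN1r // => q /negbTE->.
by rewrite subrr mul0r.
Qed.

Lemma weighted_laplacians_entry (R : comPzRingType) (N : nat) (E : rel 'I_N)
    (v : 'I_N -> 'I_N -> R) (a b : 'I_N) :
  irreflexive E ->
  let V c q := (E c q)%:R * v c q in
  (if a == b then \sum_(r < N | E a r) v a r else if E a b then - v a b else 0)
  + (if a == b then \sum_(r < N | E r a) v r a else if E b a then - v b a else 0)
  = (a == b)%:R * (\sum_q V a q + \sum_c V c a) - V a b - V b a.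
Proof.
move=> hirr V; have Vkk c : V c c = 0 by rewrite /V hirr mul0r.
have sumE (F : 'I_N -> R) (Q : pred 'I_N) :
    \sum_(r | Q r) F r = \sum_r (Q r)%:R * F r.
  by rewrite big_mkcond; apply: eq_bigr => r _; case: (Q r); rewrite ?mul1r ?mul0r.
case: eqVneq => [<-|ab].
  by rewrite Vkk mul1r !subr0 (sumE _ (E a)) (sumE _ (E^~ a)).
rewrite mul0r sub0r /V; case: (E a b); case: (E b a).
all: by rewrite ?mul1r ?mul0r ?oppr0 ?subr0 ?addr0 ?add0r.
Qed.

Section LinkMoments.
Context {R : realType} {d : measure_display} {Omega : measurableType d}.
Variable P : probability Omega R.
Variables (N : nat) (E0 : rel 'I_N) (theta : 'I_N -> 'I_N -> nat -> Omega -> bool).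
Hypothesis hirr : irreflexive E0.
Hypothesis mtheta : forall i j k, measurable [set w | theta i j k w].
Hypothesis pair_indep : forall (n : nat) (F : 'I_N -> 'I_N -> 'I_n.+1 -> bool * bool),
  P [set w | forall i j : 'I_N, (i < j)%N -> pair_ev E0 theta i j (F i j) w]
  = (\prod_(ij : 'I_N * 'I_N | (ij.1 < ij.2)%N)
       P (pair_ev E0 theta ij.1 ij.2 (F ij.1 ij.2)))%E.

Lemma measurable_state_ev k s : measurable (state_ev E0 theta k s).
Proof.
have -> : state_ev E0 theta k s = [set w | forall u : 'I_N * 'I_N,
    [set w | (E0 u.1 u.2 && theta u.1 u.2 k w) = (E0 u.1 u.2 && s u.1 u.2)] w].
  apply/seteqP; split=> w /= Aw.
    by move=> [i j] /=; case: (boolP (E0 i j)) => // /Aw->.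
  by move=> i j Eij; have := Aw (i, j); rewrite /= Eij.
by apply: measurable_forall => u; exact: measurable_andb_eq.
Qed.

Variables (k : nat) (s : 'I_N -> 'I_N -> bool).
Local Notation A := (state_ev E0 theta k s).
Hypothesis PA_gt0 : (0 < P A)%E.

Definition links (w : Omega) : {ffun 'I_N * 'I_N -> bool} :=
  [ffun u => theta u.1 u.2 k.+1 w].

Lemma measurable_links bb : measurable (links @^-1` [set bb]).
Proof.
have -> : links @^-1` [set bb] =
    [set w | forall u, [set w | (true && theta u.1 u.2 k.+1 w) = bb u] w].
  apply/seteqP; split=> w /=; first by move=> <- u; rewrite ffunE.
  by move=> bbw; apply/ffunP => u; rewrite ffunE bbw.
by apply: measurable_forall => u; exact: measurable_andb_eq.
Qed.

Lemma PrA_neq0 : Pr P A != 0.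
Proof. by rewrite gt_eqF // -lte_fin -PrE //; exact: measurable_state_ev. Qed.

Local Notation cm := (cmean P links A).

Lemma cmean_links (Q : pred {ffun 'I_N * 'I_N -> bool}) (Q' : set Omega) :
  (forall w, Q (links w) <-> Q' w) ->
  cm (fun bb => (Q bb)%:R) = Pr P (A `&` Q') / Pr P A.
Proof.
move=> QQ'; rewrite (cmean_pred P measurable_links (measurable_state_ev k s)).
by congr (Pr P (_ `&` _) / _); apply/seteqP; split=> w /QQ'.
Qed.

Definition out_link (c q : 'I_N) (bb : {ffun 'I_N * 'I_N -> bool}) : R :=
  (E0 c q && bb (c, q))%:R.

Definition link_mean c q := cm (out_link c q).

Definition link_var c q :=
  (E0 c q)%:R * cvar P A (fun w => (theta c q k.+1 w)%:R).

Lemma link_mean_nonedge c q : ~~ E0 c q -> link_mean c q = 0.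
Proof.
move=> /negbTE nE; rewrite /link_mean (eq_cmean (h := fun=> 0)) ?cmean0 //.
by move=> bb; rewrite /out_link nE.
Qed.

Lemma link_meanE c q : E0 c q ->
  link_mean c q = Pr P (A `&` [set w | theta c q k.+1 w]) / Pr P A.
Proof. by move=> Ecq; apply: cmean_links => w; rewrite Ecq ffunE. Qed.

Lemma link_varE c q :
  E0 c q -> link_var c q = link_mean c q - link_mean c q ^+ 2.
Proof.
move=> Ecq; rewrite /link_var Ecq mul1r.
have -> : (fun w => (theta c q k.+1 w)%:R : R) = (fun w => ((links w) (c, q))%:R).
  by apply: funext => w; rewrite /= ffunE.
rewrite (cvar_indicator measurable_links (measurable_state_ev k s) PrA_neq0
  (fun bb => bb (c, q))).
by congr (_ - _ ^+ 2); apply: eq_cmean => bb; rewrite /out_link Ecq.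
Qed.

Lemma out_link_moment2 c q r :
  cm (fun bb => out_link c q bb * out_link c r bb)
  = link_mean c q * link_mean c r + (q == r)%:R * link_var c q.
Proof.
case: (eqVneq q r) => [<-|qr].
  rewrite mul1r (eq_cmean (h := out_link c q)); last first.
    by move=> bb; rewrite /out_link -natrM mulnb andbb.
  have [Ecq|nE] := boolP (E0 c q); first by rewrite link_varE // /link_mean; ring.
  by rewrite -/(link_mean c q) /link_var (negbTE nE) link_mean_nonedge // !mul0r addr0.
rewrite mul0r addr0.
have [Ecq|nE] := boolP (E0 c q); last first.
  rewrite link_mean_nonedge // mul0r (eq_cmean (h := fun=> 0)) ?cmean0 // => bb.
  by rewrite /out_link (negbTE nE) mul0r.
have [Ecr|nE] := boolP (E0 c r); last first.
  rewrite (link_mean_nonedge nE) mulr0 (eq_cmean (h := fun=> 0)) ?cmean0 // => bb.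
  by rewrite /out_link (negbTE nE) mulr0.
rewrite !link_meanE //.
rewrite (eq_cmean (h := fun bb : {ffun _ -> bool} => (bb (c, q) && bb (c, r))%:R));
  last first.
  by move=> bb; rewrite /out_link Ecq Ecr -natrM mulnb.
rewrite (@cmean_links _ [set w | theta c q k.+1 w && theta c r k.+1 w]); last first.
  by move=> w /=; rewrite !ffunE.
have := state_out_edges_indep hirr mtheta pair_indep k s Ecq Ecr qr.
move=> /= indep; rewrite -[Pr P (A `&` _)](mulfK PrA_neq0) indep.
by field; exact: PrA_neq0.
Qed.

Local Notation L w := (laplacian (fun i j => E0 i j && theta i j k.+1 w)).

Lemma cexp_links (g : {ffun 'I_N * 'I_N -> bool} -> R) :
  cexp P A (fun w => g (links w)) = cm g.
Proof. exact: (cexp_cmean P measurable_links (measurable_state_ev k s)). Qed.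

Lemma laplacian_links w c b :
  L w c b = \sum_q lap_coef R c b q * out_link c q (links w).
Proof.
rewrite laplacian_lap_coef /= ?hirr //.
by apply: eq_bigr => q _; rewrite /out_link ffunE.
Qed.

Lemma cexp_laplacian c b :
  cexp P A (fun w => L w c b) = \sum_q lap_coef R c b q * link_mean c q.
Proof.
under eq_fun do rewrite laplacian_links.
rewrite (cexp_links (fun bb => \sum_q lap_coef R c b q * out_link c q bb)) cmean_sum.
by apply: eq_bigr => q _; rewrite cmeanZ.
Qed.

Lemma cexp_gram_laplacian a b :
  cexp P A (fun w => ((L w)^T *m L w) a b)
  = \sum_c (\sum_q lap_coef R c a q * link_mean c q)
           * (\sum_r lap_coef R c b r * link_mean c r)
    + ((a == b)%:R * (\sum_q link_var a q + \sum_c link_var c a)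
       - link_var a b - link_var b a).
Proof.
pose M2 c q r bb := out_link c q bb * out_link c r bb.
pose g bb := \sum_c \sum_q \sum_r lap_coef R c a q * lap_coef R c b r * M2 c q r bb.
have -> : (fun w => ((L w)^T *m L w) a b) = (fun w => g (links w)).
  apply: funext => w /=; rewrite mxE; apply: eq_bigr => c _.
  rewrite mxE !laplacian_links big_distrlr; apply: eq_bigr => q _.
  by apply: eq_bigr => r _; rewrite /M2 mulrACA.
rewrite cexp_links -(sum_lap_coef_moments _ _ out_link_moment2) /g cmean_sum.
apply: eq_bigr => c _; rewrite cmean_sum; apply: eq_bigr => q _.
by rewrite cmean_sum; apply: eq_bigr => r _; rewrite cmeanZ.
Qed.

End LinkMoments.

Theorem lemma1 (R : realType) (d : measure_display) (Omega : measurableType d)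
  (P : probability Omega R) (N : nat) (E0 : rel 'I_N)
  (theta : 'I_N -> 'I_N -> nat -> Omega -> bool)
  (p q eta : 'I_N -> 'I_N -> R)
  (hirr : irreflexive E0)
  (hmeas : forall i j k, measurable [set w | theta i j k w])
  (hpqe : forall i j, E0 i j ->
     [/\ 0 <= p i j <= 1, 0 <= q i j <= 1 & 0 <= eta i j <= 1])
  (hinit : forall i j, E0 i j -> P [set w | theta i j 0%N w] = (eta i j)%:E)
  (hmarkov : forall (k : nat) (h : nat -> 'I_N -> 'I_N -> bool)
       (s' : 'I_N -> 'I_N -> bool),
     let H := [set w | forall t, (t <= k)%N -> state_ev E0 theta t (h t) w] in
     (P (H `&` state_ev E0 theta k.+1 s') * P (state_ev E0 theta k (h k)))%E
     = (P H * P (state_ev E0 theta k (h k) `&` state_ev E0 theta k.+1 s'))%E)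
  (htrans : forall (k : nat) (s : 'I_N -> 'I_N -> bool) (i j : 'I_N), E0 i j ->
     P (state_ev E0 theta k s `&` [set w | theta i j k.+1 w])
     = ((if s i j then p i j else q i j)%:E * P (state_ev E0 theta k s))%E)
  (hindep : forall (n : nat) (F : 'I_N -> 'I_N -> 'I_n.+1 -> bool * bool),
     P [set w | forall i j : 'I_N, (i < j)%N -> pair_ev E0 theta i j (F i j) w]
     = (\prod_(ij : 'I_N * 'I_N | (ij.1 < ij.2)%N)
          P (pair_ev E0 theta ij.1 ij.2 (F ij.1 ij.2)))%E) :
  forall (k : nat) (s : 'I_N -> 'I_N -> bool),
  (0 < P (state_ev E0 theta k s))%E ->
  let A := state_ev E0 theta k s in
  let L := fun w => laplacian (fun i j => E0 i j && theta i j k.+1 w) in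
  let EL : 'M[R]_N := \matrix_(a, b) cexp P A (fun w => L w a b) in
  let v := fun i j => cvar P A (fun w => (theta i j k.+1 w)%:R) in
  let VG : 'M[R]_N := \matrix_(i, j)
      if i == j then \sum_(r < N | E0 i r) v i r
      else if E0 i j then - v i j else 0 in
  let VGT : 'M[R]_N := \matrix_(i, j)
      if i == j then \sum_(r < N | E0 r i) v r i
      else if E0 j i then - v j i else 0 in
  \matrix_(a, b) cexp P A (fun w => ((L w)^T *m L w) a b)
  = EL^T *m EL + VG + VGT.
Proof.
move=> k s PA_gt0 A L EL v VG VGT; apply/matrixP => a b.
rewrite !mxE (cexp_gram_laplacian hirr hmeas hindep PA_gt0) -addrA.
rewrite (weighted_laplacians_entry v a b hirr); congr (_ + _).
apply: eq_bigr => c _; rewrite !mxE.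
by rewrite !(cexp_laplacian P hirr hmeas k s).
Qed.
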